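(* Let $S$ be a specialisation independent scheduling rule, $G$ and $X$ p-goals, $\gamma$ a substitution and $\underline\tau$ a shifting such that $G\gamma\underline{\tau}+X$ is defined. Suppose there are p-SLD derivations $G\xrightarrow{S,E}Q$ (1) and $G\gamma\underline{\tau}+X\xrightarrow{S,D}R$ (2) via $S$ with $D/(G\gamma\underline{\tau})=E$. Then there exist a substitution $\sigma$ and a shifting $\underline{\rho}$ such that $R/(G\gamma\underline{\tau})=Q\sigma\underline{\rho}$; moreover, $\sigma$ is a renaming if $\gamma$ is a renaming and $D/X$ is empty.
   Context: A p-atom is a pair $a[p]$ of an atom $a$ and a rational priority $p$. A p-goal is a finite set of p-atoms with pairwise distinct priorities, regarded as a list ordered by increasing priority. Substitutions act on atoms and leave priorities unchanged. A clause is $h\leftarrow B$ with $h$ an atom and $B$ a p-goal. For p-goals with no common priority, $F+G=F\cup G$ (merging); $F|G$ denotes $F+G$ when all priorities of $F$ are smaller than those of $G$. A shifting $\underline{\pi}$ is a strictly increasing bijection $\mathbb{Q}\to\mathbb{Q}$ acting on priorities ($G\underline\pi$). Priority derivation step: for a p-goal $a|F$ ($a$ of least priority), clause $c=(h\leftarrow B)$, renaming $\xi$ with $var(a|F)\cap var(c\xi)=\emptyset$, idempotent relevant mgu $\theta$ of $a$ and $h\xi$, and shifting $\underline{\pi}$ with $F$, $B\xi\underline{\pi}$ sharing no priority: $a|F\xrightarrow{c\xi,\theta}(F+B\xi\underline{\pi})\theta$. A p-SLD derivation is a sequence of such steps with each renamed clause $c_j\xi_j$ variable-disjoint from the initial goal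 and all earlier renamed clauses; its template is the sequence of applied clauses. Specialisation/lowering: for $c=(h\leftarrow B)$, a step $a\lambda\underline{\sigma}|(K\lambda\underline{\sigma}+X)\xrightarrow{c}(X+K\lambda\underline{\sigma}+B\xi''\underline{\theta}'')\alpha''$ is a lowering by $X$ of a step $a|K\xrightarrow{c}(K+B\xi'\underline{\theta}')\alpha'$ ($\lambda$ a substitution, $\underline\sigma$ a shifting); it is a congruent lowering by $X$ if some shifting $\underline{\rho}$ has $K\underline{\rho}=K\underline{\sigma}$ and $B\underline{\theta}'\underline{\rho}=B\underline{\theta}''$. Steps are (congruent) lowerings of each other if each is a (congruent) lowering of the other. A set $S$ of steps is complete if (i) whenever some step $G\xrightarrow{c}\cdot$ exists, some step $G\xrightarrow{c}\cdot$ lies in $S$, and (ii) $S$ contains every step that is a congruent lowering of each other with a step of $S$. $S$ is specialisation independent if whenever $Ds_1,Ds_2\in S$ and $Ds_2$ is a lowering of $Ds_1$ by $X$, $Ds_2$ is a congruent lowering of $Ds_1$ by $X$. A specialisation independent scheduling rule is a complete specialisation independent set of steps. $G\xrightarrow{S,M}R$ denotes a p-SLD derivation with template $M$ all of whose steps lie in $S$. Sub-resolvents and sub-templates: for a step $a|(F+G)\xrightarrow{c}Q=((F+G)+B\xi\underline{\pi})\alpha$, set $Q/a=B\xi\underline{\pi}\alpha$, $Q/F=F\alpha$, $Q/(a|F)=Q/a+Q/F$, $c/a=c$, $c/F=$ empty, $c/(a|F)=c$. For a derivation $F+G\xrightarrow{c}Q\xrightarrow{K}R$, recursively $R/F=R/(Q/F)$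 and $(c|K)/F=(c/F)|(K/(Q/F))$ (for the empty derivation, $R/F=F$ and the sub-template is empty). Thus $R/F$ is the set of p-atoms of $R$ descending from $F$ and $D/F$ is the subsequence of the template $D$ of clauses applied to p-atoms descending from $F$. *)

From mathcomp Require Import all_boot all_order all_algebra.
From Stdlib Require List.
Set Implicit Arguments. Unset Strict Implicit. Unset Printing Implicit Defensive.
Import Order.TTheory GRing.Theory Num.Theory.
Local Open Scope ring_scope.

Section PSLD.
Context {Fs Ps : Type}.

Inductive term : Type := Var of nat | Fun of Fs & seq term.

Definition atom := (Ps * seq term)%type.
Definition patom := (atom * rat)%type.
(* A p-goal is represented as the list of its p-atoms sorted by strictly
   increasing priority (hence pairwise distinct priorities). *)
Definition pgoal := seq patom.
Definition is_pgoal (G : pgoal) : Prop := sorted (fun x y : patom => x.2 < y.2) G.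

Definition subst := nat -> term.

Fixpoint tsubst (s : subst) (t : term) : term :=
  match t with Var x => s x | Fun f ts => Fun f (map (tsubst s) ts) end.
Fixpoint tvars (t : term) : seq nat :=
  match t with Var x => [:: x] | Fun f ts => flatten (map tvars ts) end.

Definition asubst (s : subst) (a : atom) : atom := (a.1, map (tsubst s) a.2).
Definition avars (a : atom) : seq nat := flatten (map tvars a.2).
Definition gsubst (s : subst) (G : pgoal) : pgoal := map (fun p => (asubst s p.1, p.2)) G.
Definition gvars (G : pgoal) : seq nat := flatten (map (fun p => avars p.1) G).
Definition gshift (pi : rat -> rat) (G : pgoal) : pgoal := map (fun p => (p.1, pi p.2)) G.

Definition finsubst (s : subst) : Prop := exists n, forall x, (n <= x)%N -> s x = Var x.
Definition renaming (s : subst) : Prop :=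
  exists f : nat -> nat, bijective f /\ (exists n, forall x, (n <= x)%N -> f x = x)
                         /\ forall x, s x = Var (f x).
Definition shifting (pi : rat -> rat) : Prop :=
  (forall x y, x < y -> pi x < pi y) /\ bijective pi.

(* merging F + G (meaningful when no common priority) *)
Definition pdisj (F G : pgoal) : Prop := forall x y, List.In x F -> List.In y G -> x.2 <> y.2.
Definition pmerge (F G : pgoal) : pgoal := path.merge (fun x y : patom => x.2 <= y.2) F G.

Definition is_unifier (th : subst) (a b : atom) : Prop := asubst th a = asubst th b.
Definition is_mgu (th : subst) (a b : atom) : Prop :=
  is_unifier th a b /\
  forall d, is_unifier d a b -> exists eta : subst, forall x, d x = tsubst eta (th x).
Definition idempotent (th : subst) : Prop := forall x, tsubst th (th x) = th x.
Definition relevant (th : subst) (a b : atom) : Prop :=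
  forall x, th x <> Var x ->
    (x \in avars a ++ avars b) /\ {subset tvars (th x) <= avars a ++ avars b}.

Definition clause := (atom * pgoal)%type.
Definition is_clause (c : clause) : Prop := is_pgoal c.2.
Definition cvars (c : clause) : seq nat := avars c.1 ++ gvars c.2.
Definition csubst (s : subst) (c : clause) : clause := (asubst s c.1, gsubst s c.2).

(* A step G --(c xi, theta)--> R, recorded with its shifting pi. *)
Record step := Step {
  st_goal : pgoal; st_clause : clause; st_ren : subst; st_mgu : subst; st_shift : rat -> rat }.

Definition is_step (d : step) : Prop :=
  match st_goal d with
  | [::] => False
  | a :: K =>
      is_pgoal (st_goal d) /\ is_clause (st_clause d) /\
      renaming (st_ren d) /\
      (forall x, x \in gvars (st_goal d) -> x \notin cvars (csubst (st_ren d) (st_clause d))) /\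
      is_mgu (st_mgu d) a.1 (asubst (st_ren d) (st_clause d).1) /\
      idempotent (st_mgu d) /\
      relevant (st_mgu d) a.1 (asubst (st_ren d) (st_clause d).1) /\
      shifting (st_shift d) /\
      pdisj K (gshift (st_shift d) (gsubst (st_ren d) (st_clause d).2))
  end.

Definition st_body (d : step) : pgoal :=
  gshift (st_shift d) (gsubst (st_ren d) (st_clause d).2).

Definition st_res (d : step) : pgoal :=
  match st_goal d with
  | [::] => [::]
  | a :: K => gsubst (st_mgu d) (pmerge K (st_body d))
  end.

(* p-SLD derivations: chains of steps, renamed clauses variable-disjoint from
   the initial goal and from all earlier renamed clauses *)
Fixpoint chain (G : pgoal) (ds : seq step) (R : pgoal) : Prop :=
  match ds with
  | [::] => R = G
  | d :: ds' => st_goal d = G /\ is_step d /\ chain (st_res d) ds' R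
  end.
Fixpoint fresh_chain (acc : seq nat) (ds : seq step) : Prop :=
  match ds with
  | [::] => True
  | d :: ds' =>
      let v := cvars (csubst (st_ren d) (st_clause d)) in
      (forall x, x \in v -> x \notin acc) /\ fresh_chain (acc ++ v) ds'
  end.
Definition psld (G : pgoal) (ds : seq step) (R : pgoal) : Prop :=
  is_pgoal G /\ chain G ds R /\ fresh_chain (gvars G) ds.
Definition template (ds : seq step) : seq clause := map st_clause ds.
Definition psld_via (S : step -> Prop) (G : pgoal) (ds : seq step) (R : pgoal) : Prop :=
  psld G ds R /\ (forall d, List.In d ds -> S d).

Definition lowering (X : pgoal) (d1 d2 : step) : Prop :=
  is_step d1 /\ is_step d2 /\ st_clause d2 = st_clause d1 /\
  exists a K, st_goal d1 = a :: K /\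
  exists (lam : subst) (sg : rat -> rat), finsubst lam /\ shifting sg /\
    pdisj (gshift sg (gsubst lam K)) X /\
    st_goal d2 = (asubst lam a.1, sg a.2) :: pmerge (gshift sg (gsubst lam K)) X.

Definition congr_lowering (X : pgoal) (d1 d2 : step) : Prop :=
  is_step d1 /\ is_step d2 /\ st_clause d2 = st_clause d1 /\
  exists a K, st_goal d1 = a :: K /\
  exists (lam : subst) (sg : rat -> rat), finsubst lam /\ shifting sg /\
    pdisj (gshift sg (gsubst lam K)) X /\
    st_goal d2 = (asubst lam a.1, sg a.2) :: pmerge (gshift sg (gsubst lam K)) X /\
    exists rho, shifting rho /\ gshift rho K = gshift sg K /\
      gshift rho (gshift (st_shift d1) (st_clause d1).2)
        = gshift (st_shift d2) (st_clause d1).2.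

Definition mutual_congr_lowering (d1 d2 : step) : Prop :=
  (exists X, congr_lowering X d1 d2) /\ (exists X, congr_lowering X d2 d1).

Definition complete (S : step -> Prop) : Prop :=
  (forall d, S d -> is_step d) /\
  (forall G c, (exists d, is_step d /\ st_goal d = G /\ st_clause d = c) ->
               exists d, S d /\ st_goal d = G /\ st_clause d = c) /\
  (forall d d', S d -> is_step d' -> mutual_congr_lowering d d' -> S d').

Definition spec_independent (S : step -> Prop) : Prop :=
  forall d1 d2 X, S d1 -> S d2 -> lowering X d1 d2 -> congr_lowering X d1 d2.

Definition si_scheduling_rule (S : step -> Prop) : Prop :=
  complete S /\ spec_independent S.

(* sub-resolvents and sub-templates, relationally: for a step with goal a::K
   and a sub-goal H of it, H' = Q/H. *)
Definition sub_step (d : step) (H H' : pgoal) : Prop :=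
  match st_goal d with
  | [::] => False
  | a :: K =>
      (exists F, H = a :: F /\
         H' = pmerge (gsubst (st_mgu d) (st_body d)) (gsubst (st_mgu d) F))
      \/ (~ List.In a H /\ H' = gsubst (st_mgu d) H)
  end.

Definition sub_clause (d : step) (H : pgoal) (M M' : seq clause) : Prop :=
  match st_goal d with
  | [::] => False
  | a :: K => (List.In a H /\ M = st_clause d :: M') \/ (~ List.In a H /\ M = M')
  end.

(* sub_res ds H R' :  R' = R/H  for the derivation with steps ds *)
Fixpoint sub_res (ds : seq step) (H R' : pgoal) : Prop :=
  match ds with
  | [::] => R' = H
  | d :: ds' => exists H', sub_step d H H' /\ sub_res ds' H' R'
  end.

(* sub_tmpl ds H M :  M = D/H  for the derivation with steps ds *)
Fixpoint sub_tmpl (ds : seq step) (H : pgoal) (M : seq clause) : Prop :=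
  match ds with
  | [::] => M = [::]
  | d :: ds' => exists H' M', sub_step d H H' /\ sub_tmpl ds' H' M' /\ sub_clause d H M M'
  end.

End PSLD.

From mathcomp Require Import all_boot all_order all_algebra.
From Stdlib Require Import Classical.
Set Implicit Arguments. Unset Strict Implicit. Unset Printing Implicit Defensive.
Import Order.TTheory GRing.Theory Num.Theory.
Local Open Scope ring_scope.

(* Induct along D, keeping the invariant that the part of the current D-goal
   descending from G gamma tau is an instance (Q_i sigma) rho of the current
   E-goal Q_i, disjoint in priorities from the rest.  A D-step selecting an
   atom outside that part only applies its mgu theta to it, so sigma becomes
   theta sigma.  A D-step selecting an atom inside it must, since D/(G gamma tau)
   = E, use the clause of the next E-step on the head of Q_i; it is then a
   lowering of that E-step, hence a congruent one by specialisation
   independence, which provides a single shifting relating the two remaining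
   goals and the two shifted bodies; and since the E-step's unifier is most
   general, the D-resolvent is an instance of the E-resolvent.  If sigma is a
   renaming, the two unified pairs are variants, each unifier factors through
   the other, and the connecting substitution is invertible on the relevant
   variables, hence agrees there with a renaming. *)

Lemma mem_flatten_mapP (A : Type) (h : A -> seq nat) (l : seq A) v :
  v \in flatten (map h l) <-> exists2 u, List.In u l & v \in h u.
Proof.
elim: l => [|u l IH] /=; first by split=> // -[].
rewrite mem_cat; split.
- by case/orP => [Hv|/IH [w Hw Hv]]; [exists u; first left | exists w; first right].
- move=> [w [<-|Hw] Hv]; first by rewrite Hv.
  by apply/orP; right; apply/IH; exists w.
Qed.

Section Substitution.
Context {Fs Ps : Type}.
Local Notation term := (@term Fs).
Local Notation atom := (@atom Fs Ps).
Local Notation patom := (@patom Fs Ps).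
Local Notation pgoal := (@pgoal Fs Ps).
Local Notation subst := (@subst Fs).

(* The generated induction principle of [term] gives no hypothesis for the
   arguments of [Fun]. *)
Definition term_nested_ind (P : term -> Prop) (HV : forall x, P (Var x))
    (HF : forall f ts, (forall t, List.In t ts -> P t) -> P (Fun f ts)) :
  forall t, P t :=
  fix rec t := match t with
  | Var x => HV x
  | Fun f ts => HF f ts ((fix go (l : seq term) : forall u, List.In u l -> P u :=
        match l with
        | [::] => fun u H => match H with end
        | v :: l' => fun u H => match H with
                      | or_introl e => eq_ind v P (rec v) u e
                      | or_intror H' => go l' u H' end end) ts)
  end.

Lemma tsubst_comp (s1 s2 : subst) t :
  tsubst s2 (tsubst s1 t) = tsubst (tsubst s2 \o s1) t.
Proof.
elim/term_nested_ind: t => //= f ts IH; congr Fun; rewrite -map_comp.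
by apply: List.map_ext_in => u Hu /=; rewrite IH.
Qed.

Lemma eq_in_tsubst (s1 s2 : subst) t :
  {in tvars t, s1 =1 s2} -> tsubst s1 t = tsubst s2 t.
Proof.
elim/term_nested_ind: t => /= [x H|f ts IH H]; first by apply: H; rewrite inE.
congr Fun; apply: List.map_ext_in => u Hu; apply: IH => // x Hx.
by apply: H; apply/mem_flatten_mapP; exists u.
Qed.

Lemma tvars_tsubstP (s : subst) t v :
  v \in tvars (tsubst s t) <-> exists2 x, x \in tvars t & v \in tvars (s x).
Proof.
elim/term_nested_ind: t => /= [x|f ts IH].
  split=> [Hv|[y]]; first by exists x; rewrite ?inE.
  by rewrite inE => /eqP ->.
rewrite -map_comp; split.
- case/mem_flatten_mapP => u Hu /= /(IH u Hu) [x Hx Hv].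
  by exists x => //; apply/mem_flatten_mapP; exists u.
- case=> x /mem_flatten_mapP [u Hu Hx] Hv; apply/mem_flatten_mapP; exists u => //.
  by apply/(IH u Hu); exists x.
Qed.

Lemma tsubst_id_vars (s : subst) t :
  tsubst s t = t -> {in tvars t, forall x, s x = Var x}.
Proof.
elim/term_nested_ind: t => [y|f ts IH] /= H x; first by rewrite inE => /eqP ->.
case: H => H /mem_flatten_mapP [u Hu Hx]; apply: (IH u Hu) => //.
elim: ts H Hu {IH Hx} => //= w ts IH [E1 E2] [<-|Hu] //; exact: IH.
Qed.

Lemma asubst_comp (s1 s2 : subst) (a : atom) :
  asubst s2 (asubst s1 a) = asubst (tsubst s2 \o s1) a.
Proof.
rewrite /asubst /= -map_comp; congr pair; apply: List.map_ext_in => u _.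
exact: tsubst_comp.
Qed.

Lemma eq_in_asubst (s1 s2 : subst) (a : atom) :
  {in avars a, s1 =1 s2} -> asubst s1 a = asubst s2 a.
Proof.
move=> H; rewrite /asubst; congr pair; apply: List.map_ext_in => u Hu.
by apply: eq_in_tsubst => x Hx; apply: H; apply/mem_flatten_mapP; exists u.
Qed.

Lemma avars_asubstP (s : subst) (a : atom) v :
  v \in avars (asubst s a) <-> exists2 x, x \in avars a & v \in tvars (s x).
Proof.
rewrite /avars /= -map_comp; split.
- case/mem_flatten_mapP => u Hu /= /tvars_tsubstP [x Hx Hv].
  by exists x => //; apply/mem_flatten_mapP; exists u.
- case=> x /mem_flatten_mapP [u Hu Hx] Hv; apply/mem_flatten_mapP; exists u => //.
  by apply/tvars_tsubstP; exists x.
Qed.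

Lemma gsubst_comp (s1 s2 : subst) (G : pgoal) :
  gsubst s2 (gsubst s1 G) = gsubst (tsubst s2 \o s1) G.
Proof.
rewrite /gsubst -map_comp; apply: List.map_ext_in => p _ /=.
by rewrite asubst_comp.
Qed.

Lemma eq_in_gsubst (s1 s2 : subst) (G : pgoal) :
  {in gvars G, s1 =1 s2} -> gsubst s1 G = gsubst s2 G.
Proof.
move=> H; apply: List.map_ext_in => p Hp; rewrite (@eq_in_asubst s1 s2) // => x Hx.
by apply: H; apply/mem_flatten_mapP; exists p.
Qed.

Lemma gvars_gsubstP (s : subst) (G : pgoal) v :
  v \in gvars (gsubst s G) <-> exists2 x, x \in gvars G & v \in tvars (s x).
Proof.
rewrite /gvars /gsubst -map_comp; split.
- case/mem_flatten_mapP => p Hp /= /avars_asubstP [x Hx Hv].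
  by exists x => //; apply/mem_flatten_mapP; exists p.
- case=> x /mem_flatten_mapP [p Hp Hx] Hv; apply/mem_flatten_mapP; exists p => //.
  by apply/avars_asubstP; exists x.
Qed.

Lemma gvars_cons (p : patom) (G : pgoal) : gvars (p :: G) = avars p.1 ++ gvars G.
Proof. by []. Qed.

Lemma gvars_gshift r (G : pgoal) : gvars (gshift r G) = gvars G.
Proof. by rewrite /gvars /gshift -map_comp. Qed.

Lemma gshift_gsubst r s (G : pgoal) : gshift r (gsubst s G) = gsubst s (gshift r G).
Proof. by rewrite /gshift /gsubst -!map_comp. Qed.

Lemma In_gsubst s (G : pgoal) x :
  List.In x (gsubst s G) -> exists2 y, List.In y G & x.2 = y.2.
Proof. by case/List.in_map_iff => y [<- Hy]; exists y. Qed.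

End Substitution.

Section Merge.
Context {T : Type} (leT : rel T).

Lemma merge_cons x s1 y s2 : merge leT (x :: s1) (y :: s2) =
  if leT x y then x :: merge leT s1 (y :: s2) else y :: merge leT (x :: s1) s2.
Proof. by []. Qed.

Lemma In_merge s1 s2 x :
  List.In x (merge leT s1 s2) <-> List.In x s1 \/ List.In x s2.
Proof.
elim: s1 s2 => [|a s1 IH1] s2; first by split; [right|case].
elim: s2 => [|b s2 IH2]; first by rewrite /=; tauto.
rewrite merge_cons; case: (leT a b) => /=.
- by have := IH1 (b :: s2); rewrite /=; tauto.
- by move: IH2; rewrite /=; tauto.
Qed.

Lemma filter_merge_l (p : pred T) s1 s2 :
  all p s1 -> all (predC p) s2 -> filter p (merge leT s1 s2) = s1.
Proof.
elim: s1 s2 => [|a s1 IH1] s2.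
  by move=> _; elim: s2 => //= b s2 IH /andP [/negbTE -> /IH].
move=> /= /andP [pa ps1]; elim: s2 => [|b s2 IH2].
  by move=> _ /=; rewrite pa; congr cons; apply/all_filterP.
move=> /andP [pb ps2]; rewrite merge_cons; case: (leT a b) => /=.
- by rewrite pa IH1 //=; apply/andP.
- by rewrite (negbTE pb) IH2.
Qed.

End Merge.

Lemma mem_map_In (A : Type) (B : eqType) (f : A -> B) (l : seq A) r :
  r \in map f l -> exists2 y, List.In y l & r = f y.
Proof.
elim: l => //= y l IH; rewrite inE => /orP [/eqP ->|/IH [z Hz ->]].
  by exists y; first left.
by exists z; first right.
Qed.

Section PriorityGoals.
Context {Fs Ps : Type}.
Local Notation patom := (@patom Fs Ps).
Local Notation pgoal := (@pgoal Fs Ps).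
Local Notation subst := (@subst Fs).

Lemma In_pmerge (A B : pgoal) x :
  List.In x (pmerge A B) <-> List.In x A \/ List.In x B.
Proof. exact: In_merge. Qed.

Lemma pmerge_comm (A B : pgoal) : pdisj A B -> pmerge A B = pmerge B A.
Proof.
rewrite /pmerge; elim: A B => [|a A IHA] B; first by case: B.
elim: B => [|b B IHB] dAB; first by [].
have ab : a.2 <> b.2 by apply: dAB; left.
rewrite !merge_cons; case: (lerP a.2 b.2) => lab; case: (lerP b.2 a.2) => lba.
- by case: ab; apply/eqP; rewrite eq_le lab lba.
- by rewrite IHA // => x y Hx Hy; apply: dAB; [right|].
- by rewrite IHB // => x y Hx Hy; apply: dAB; [|right].
- by have := lt_trans lab lba; rewrite ltxx.
Qed.

Lemma pmergeA (A B C : pgoal) : pmerge (pmerge A B) C = pmerge A (pmerge B C).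
Proof.
apply/esym/(@mergeA _ (fun x y : patom => x.2 <= y.2)) => [x y|y x z].
  exact: le_total.
exact: le_trans.
Qed.

Lemma gsubst_pmerge (s : subst) (A B : pgoal) :
  gsubst s (pmerge A B) = pmerge (gsubst s A) (gsubst s B).
Proof. exact: map_merge. Qed.

Lemma gshift_pmerge r (A B : pgoal) : shifting r ->
  gshift r (pmerge A B) = pmerge (gshift r A) (gshift r B).
Proof. by move=> [r_mono _]; apply: map_merge => x y /=; rewrite (le_mono r_mono). Qed.

Lemma gvars_pmerge (A B : pgoal) x :
  x \in gvars (pmerge A B) = (x \in gvars A) || (x \in gvars B).
Proof.
apply/idP/orP => [/mem_flatten_mapP [p /In_pmerge [Hp|Hp] Hx]|Hx].
- by left; apply/mem_flatten_mapP; exists p.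
- by right; apply/mem_flatten_mapP; exists p.
- apply/mem_flatten_mapP.
  by case: Hx => /mem_flatten_mapP [p Hp Hx]; exists p => //; apply/In_pmerge; [left|right].
Qed.

Lemma pdisj_sym (A B : pgoal) : pdisj A B -> pdisj B A.
Proof. by move=> dAB x y Hx Hy E; apply: (dAB y x Hy Hx); rewrite E. Qed.

Lemma pdisj_gsubst (s s' : subst) (A B : pgoal) :
  pdisj A B -> pdisj (gsubst s A) (gsubst s' B).
Proof. by move=> dAB x y /In_gsubst [x' Hx ->] /In_gsubst [y' Hy ->]; apply: dAB. Qed.

Lemma pdisj_pmergel (A B C : pgoal) :
  pdisj (pmerge A B) C <-> pdisj A C /\ pdisj B C.
Proof.
split=> [dABC|[dAC dBC] x y /In_pmerge [Hx|Hx]].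
- by split=> x y Hx; apply: dABC; apply/In_pmerge; [left|right].
- exact: dAC.
- exact: dBC.
Qed.

Lemma pdisj_pmerger (A B C : pgoal) :
  pdisj C (pmerge A B) <-> pdisj C A /\ pdisj C B.
Proof.
split=> [dCAB|[dCA dCB]].
  by split=> x y Hx Hy; apply: dCAB Hx _; apply/In_pmerge; [left|right].
by apply/pdisj_sym/pdisj_pmergel; split; apply: pdisj_sym.
Qed.

Lemma pdisj_consl (a : patom) (A B : pgoal) : pdisj (a :: A) B -> pdisj A B.
Proof. by move=> daAB x y Hx; apply: daAB; right. Qed.

Lemma pmerge_head_l (a : patom) (F Y K : pgoal) :
  pdisj (a :: F) Y -> pmerge (a :: F) Y = a :: K -> K = pmerge F Y.
Proof.
case: Y => [|y Y] daFY; first by move=> /= [<-]; case: F {daFY}.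
rewrite /pmerge merge_cons; case: ifP => _ [] // ay _.
by case: (daFY a y); [left|left|rewrite ay].
Qed.

Lemma pmerge_head_r (a : patom) (H Y K : pgoal) :
  ~ List.In a H -> pmerge H Y = a :: K -> exists2 Y', Y = a :: Y' & K = pmerge H Y'.
Proof.
case: H => [|h H] aH; first by exists K.
case: Y => [|y Y]; first by case=> ha; case: aH; left.
rewrite /pmerge merge_cons; case: ifP => _ [ha <-]; first by case: aH; left.
by exists Y; rewrite ?ha.
Qed.

Lemma pmerge_priorities_cancel (A A' Y : pgoal) :
  pdisj A Y -> pdisj A' Y -> pmerge A Y = pmerge A' Y -> map snd A = map snd A'.
Proof.
move=> dAY dA'Y /(congr1 (map snd)).
rewrite !(map_merge (leT := fun x y : rat => x <= y)) //.
pose notY r := r \notin map snd Y.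
have Y_notY : all (predC notY) (map snd Y) by apply/allP => r; rewrite /= negbK.
have notY_disj B : pdisj B Y -> all notY (map snd B).
  move=> dBY; rewrite all_map; elim: B dBY => //= b B IH dBY.
  rewrite IH ?andbT; last exact: pdisj_consl dBY.
  by apply/negP => /mem_map_In [y Hy]; apply: dBY Hy; left.
move=> /(congr1 (filter notY)).
by rewrite !filter_merge_l ?notY_disj.
Qed.

Lemma gshift_priorities (r1 r2 : rat -> rat) (s1 s2 : subst) (K : pgoal) :
  map snd (gshift r1 (gsubst s1 K)) = map snd (gshift r2 (gsubst s2 K)) ->
  gshift r1 K = gshift r2 K.
Proof. by elim: K => //= p K IH [-> /IH ->]. Qed.

End PriorityGoals.

Definition nat_swap (a b x : nat) : nat :=
  if x == a then b else if x == b then a else x.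

Lemma nat_swapK a b : involutive (nat_swap a b).
Proof.
move=> x; rewrite /nat_swap.
case: (eqVneq x a) => [->|xa]; first by rewrite eqxx; case: eqVneq.
case: (eqVneq x b) => [->|xb]; first by rewrite eqxx.
by rewrite (negbTE xa) (negbTE xb).
Qed.

Lemma extend_inj_in (W : seq nat) (k : nat -> nat) : {in W &, injective k} ->
  exists f, [/\ bijective f, exists n, forall x, (n <= x)%N -> f x = x & {in W, f =1 k}].
Proof.
elim: W => [|w W IH] k_inj.
  by exists id; split=> //; [exists id | exists 0%N].
have [|f [f_bij [n f_id] fk]] := IH.
  by move=> x y Hx Hy; apply: k_inj; rewrite inE ?Hx ?Hy orbT.
have [wW|wW] := boolP (w \in W).
  exists f; split=> //; first by exists n.
  by move=> x; rewrite inE => /orP [/eqP ->|]; apply: fk.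
exists (nat_swap (f w) (k w) \o f); split.
- exact: bij_comp (inv_bij (nat_swapK _ _)) f_bij.
- exists (maxn n (maxn (f w) (k w)).+1) => x.
  rewrite geq_max gtn_max => /andP [nx /andP [fwx kwx]].
  by rewrite /= (f_id x nx) /nat_swap (gtn_eqF fwx) (gtn_eqF kwx).
move=> x; rewrite inE => /orP [/eqP ->|xW] /=; first by rewrite /nat_swap eqxx.
have xw : x != w by apply: contraNneq wW => <-.
have kx_fw : k x != f w.
  by apply: contra xw => /eqP; rewrite -fk // => /(bij_inj f_bij) ->.
have kx_kw : k x != k w.
  by apply: contra xw => /eqP /k_inj -> //; rewrite inE ?eqxx ?xW ?orbT.
by rewrite /= (fk x xW) /nat_swap (negbTE kx_fw) (negbTE kx_kw).
Qed.

Section Renamings.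
Context {Fs Ps : Type}.
Local Notation atom := (@atom Fs Ps).
Local Notation subst := (@subst Fs).
Local Notation clause := (@clause Fs Ps).

Lemma renaming_finsubst (s : subst) : renaming s -> finsubst s.
Proof. by move=> [f [_ [[n f_id] sf]]]; exists n => x nx; rewrite sf f_id. Qed.

Lemma finsubst_comp (s1 s2 : subst) :
  finsubst s1 -> finsubst s2 -> finsubst (tsubst s2 \o s1).
Proof.
move=> [n1 s1_id] [n2 s2_id]; exists (maxn n1 n2) => x.
by rewrite geq_max => /andP [n1x n2x] /=; rewrite s1_id //= s2_id.
Qed.

Lemma relevant_finsubst (th : subst) (a b : atom) : relevant th a b -> finsubst th.
Proof.
move=> th_rel; exists (\max_(v <- avars a ++ avars b) v).+1 => x.
(* [th x = Var x] is not decidable over an arbitrary signature. *)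
rewrite ltnNge => Nx; apply: NNPP => /th_rel [Hx _].
by move: Nx; rewrite (@leq_bigmax_seq _ _ predT id x Hx).
Qed.

Lemma finsubst_restrict (eta : subst) (W : seq nat) :
  exists s, finsubst s /\ {in W, s =1 eta}.
Proof.
exists (fun x => if x \in W then eta x else Var x); split=> [|x ->] //.
exists (\max_(v <- W) v).+1 => x; rewrite ltnNge => Nx.
by case: ifPn => // Hx; move: Nx; rewrite (@leq_bigmax_seq _ _ predT id x Hx).
Qed.

Lemma renaming_of_left_inverse (eta eta' : subst) (W : seq nat) :
  {in W, forall v, tsubst eta' (eta v) = Var v} ->
  exists s, renaming s /\ {in W, s =1 eta}.
Proof.
move=> etaK; pose k v := if eta v is Var w then w else v.
have eta_var : {in W, forall v, eta v = Var (k v)}.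
  by move=> v /etaK; rewrite /k; case: (eta v).
have [|f [f_bij f_id fk]] := @extend_inj_in W k.
  move=> v v' Hv Hv' kvv'.
  by have := etaK v' Hv'; rewrite eta_var // -kvv' -eta_var // etaK // => -[].
exists (fun x => Var (f x)); split; first by exists f.
by move=> v Hv; rewrite fk // eta_var.
Qed.

Lemma cvars_csubstP (s : subst) (c : clause) v :
  v \in cvars (csubst s c) <-> exists2 x, x \in cvars c & v \in tvars (s x).
Proof.
rewrite /cvars /csubst mem_cat; split.
- case/orP => [/avars_asubstP|/gvars_gsubstP] [x Hx Hv];
    by exists x; rewrite // mem_cat Hx ?orbT.
- case=> x; rewrite mem_cat => /orP [Hx|Hx] Hv; apply/orP.
  + by left; apply/avars_asubstP; exists x.
  + by right; apply/gvars_gsubstP; exists x.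
Qed.

Lemma glue_after_renaming (V : seq nat) (c : clause) (xi1 xi2 sig : subst) :
  renaming xi1 -> {in V, forall x, x \notin cvars (csubst xi1 c)} ->
  exists del : subst, {in V, del =1 sig} /\ {in cvars c, tsubst del \o xi1 =1 xi2}.
Proof.
move=> [f1 [[g1 f1K g1K] [_ xi1E]]] V_fresh.
(* [xi2 \o xi1^-1] on the renamed clause, [sig] elsewhere *)
exists (fun x => if g1 x \in cvars c then xi2 (g1 x) else sig x); split.
  move=> x Hx; case: ifPn => // Hc; have := V_fresh x Hx.
  by move/negP; case; apply/cvars_csubstP; exists (g1 x); rewrite // xi1E g1K inE.
by move=> y Hy; rewrite /= xi1E /= f1K Hy.
Qed.

Lemma glued_renamings_inj (V : seq nat) (c : clause) (xi1 xi2 sig del : subst) :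
  renaming xi1 -> renaming xi2 -> renaming sig ->
  {in V, del =1 sig} -> {in cvars c, tsubst del \o xi1 =1 xi2} ->
  {in V, forall x v, v \in tvars (sig x) -> v \notin cvars (csubst xi2 c)} ->
  exists h, {in V ++ cvars (csubst xi1 c), forall x, del x = Var (h x)} /\
            {in V ++ cvars (csubst xi1 c) &, injective h}.
Proof.
move=> [f1 [[g1 f1K g1K] [_ xi1E]]] [f2 [f2_bij [_ xi2E]]] [g [g_bij [_ sigE]]].
move=> delV delC V_fresh.
have xi1_cvars x : x \in cvars (csubst xi1 c) -> g1 x \in cvars c /\ x = f1 (g1 x).
  by case/cvars_csubstP => y Hy; rewrite xi1E inE => /eqP ->; rewrite f1K.
pose h x := if x \in V then g x else f2 (g1 x).
exists h; split.
  move=> x; rewrite /h mem_cat; case: ifPn => [/delV -> //|_ /= /xi1_cvars [Hc Ex]].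
  by have := delC _ Hc; rewrite /= xi1E xi2E -Ex.
have clause_img x : x \in cvars (csubst xi1 c) -> f2 (g1 x) \in cvars (csubst xi2 c).
  by case/xi1_cvars => Hc _; apply/cvars_csubstP; exists (g1 x); rewrite // xi2E inE.
move=> x x' Hx Hx'; rewrite /h.
case: ifPn => xV; case: ifPn => x'V.
- by move/(bij_inj g_bij).
- rewrite mem_cat (negbTE x'V) in Hx' => E.
  have gx_fresh : g x \notin cvars (csubst xi2 c) by apply: V_fresh xV _ _; rewrite sigE inE.
  by move: gx_fresh; rewrite E clause_img.
- rewrite mem_cat (negbTE xV) in Hx => E.
  have gx_fresh : g x' \notin cvars (csubst xi2 c) by apply: V_fresh x'V _ _; rewrite sigE inE.
  by move: gx_fresh; rewrite -E clause_img.
- by move/(bij_inj f2_bij) => E; rewrite -[x]g1K -[x']g1K E.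
Qed.

End Renamings.

Section Unifiers.
Context {Fs Ps : Type}.
Local Notation atom := (@atom Fs Ps).
Local Notation subst := (@subst Fs).

Lemma mgu_renamed_inverse (a b : atom) (th1 th2 eta del : subst) (h : nat -> nat)
    (V : seq nat) :
  {subset avars a ++ avars b <= V} ->
  {in V, forall x, del x = Var (h x)} -> {in V &, injective h} ->
  is_unifier th1 a b -> is_mgu th2 (asubst del a) (asubst del b) ->
  (forall x, tsubst th2 (del x) = tsubst eta (th1 x)) ->
  exists eta', {in V, forall x, {in tvars (th1 x), forall v, tsubst eta' (eta v) = Var v}}.
Proof.
(* [th1 \o h^-1] unifies the renamed pair, so [th1] factors through [th2 \o del],
   i.e. through [eta]; thus [eta] has a left inverse on the variables of [th1 x]. *)
move=> abV delV h_inj th1_unif [_ th2_mgu] eta_th1.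
pose h' y := nth y V (find (fun x => h x == y) V).
have h'K : {in V, forall x, h' (h x) = x}.
  move=> x Hx; have hx_in : has (fun z => h z == h x) V by apply/hasP; exists x.
  apply: h_inj => //; first by rewrite mem_nth // -has_find.
  exact/eqP/(nth_find (h x) hx_in).
have undo_del (e : atom) : {subset avars e <= V} ->
    asubst (th1 \o h') (asubst del e) = asubst th1 e.
  move=> eV; rewrite asubst_comp; apply: eq_in_asubst => x Hx.
  by rewrite /= delV ?eV //= h'K ?eV.
have [eta' th1_th2] : exists eta', forall y, th1 (h' y) = tsubst eta' (th2 y).
  apply: th2_mgu; rewrite /is_unifier !undo_del // => x Hx; apply: abV;
    by rewrite mem_cat Hx ?orbT.
exists eta' => x Hx; apply: (@tsubst_id_vars _ (tsubst eta' \o eta)).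
by rewrite -tsubst_comp -eta_th1 delV //= -th1_th2 h'K.
Qed.

End Unifiers.

Section Resolvents.
Context {Fs Ps : Type}.
Local Notation atom := (@atom Fs Ps).
Local Notation pgoal := (@pgoal Fs Ps).
Local Notation subst := (@subst Fs).
Local Notation clause := (@clause Fs Ps).

Variables (a : atom) (K : pgoal) (c : clause) (xi1 xi2 th1 th2 sig : subst).
Variable pi : rat -> rat.
Hypotheses (xi1_ren : renaming xi1) (xi2_ren : renaming xi2).
Hypothesis fresh1 : {in avars a ++ gvars K, forall x, x \notin cvars (csubst xi1 c)}.
Hypothesis fresh2 :
  {in avars (asubst sig a) ++ gvars (gsubst sig K), forall x, x \notin cvars (csubst xi2 c)}.
Hypotheses (th1_mgu : is_mgu th1 a (asubst xi1 c.1))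
           (th2_mgu : is_mgu th2 (asubst sig a) (asubst xi2 c.1)).

Let V := avars a ++ gvars K.
Let L := pmerge K (gshift pi (gsubst xi1 c.2)).

Lemma resolvent_instance : exists sig1, [/\ finsubst sig1,
  gsubst sig1 (gsubst th1 L) =
    gsubst th2 (pmerge (gsubst sig K) (gshift pi (gsubst xi2 c.2)))
  & renaming sig -> renaming sig1].
Proof.
have [del [delV delC]] := glue_after_renaming xi2 sig xi1_ren fresh1.
have del_a : asubst del a = asubst sig a.
  by apply: eq_in_asubst => x Hx; rewrite delV // mem_cat Hx.
have del_K : gsubst del K = gsubst sig K.
  by apply: eq_in_gsubst => x Hx; rewrite delV // mem_cat Hx orbT.
have del_h : asubst del (asubst xi1 c.1) = asubst xi2 c.1.
  by rewrite asubst_comp; apply: eq_in_asubst => y Hy; rewrite delC // mem_cat Hy.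
have del_B : gsubst del (gsubst xi1 c.2) = gsubst xi2 c.2.
  by rewrite gsubst_comp; apply: eq_in_gsubst => y Hy; rewrite delC // mem_cat Hy orbT.
have [eta eta_th1] : exists eta, forall x, tsubst th2 (del x) = tsubst eta (th1 x).
  by apply: th1_mgu.2; rewrite /is_unifier -!asubst_comp del_a del_h; case: th2_mgu.
have eta_L : gsubst eta (gsubst th1 L) =
    gsubst th2 (pmerge (gsubst sig K) (gshift pi (gsubst xi2 c.2))).
  rewrite gsubst_comp -(@eq_in_gsubst _ _ (tsubst th2 \o del)) => [|x _]; last first.
    exact: eta_th1.
  by rewrite -gsubst_comp /L gsubst_pmerge del_K -gshift_gsubst del_B.
pose W := gvars (gsubst th1 L).
suff [s [s_fin s_eta s_ren]] :
    exists s, [/\ finsubst s, {in W, s =1 eta} & renaming sig -> renaming s].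
  by exists s; split=> //; rewrite -eta_L; apply: eq_in_gsubst.
have [sig_ren|sig_nren] := classic (renaming sig); last first.
  by have [s [s_fin s_eta]] := finsubst_restrict eta W; exists s; split=> // /sig_nren.
have sig_fresh : {in V, forall x v, v \in tvars (sig x) -> v \notin cvars (csubst xi2 c)}.
  move=> x; rewrite mem_cat => /orP [Hx|Hx] v Hv; apply: fresh2; rewrite mem_cat.
    by rewrite (_ : v \in _) //; apply/avars_asubstP; exists x.
  by rewrite (_ : v \in gvars _) ?orbT //; apply/gvars_gsubstP; exists x.
have [h [delU h_inj]] := glued_renamings_inj xi1_ren xi2_ren sig_ren delV delC sig_fresh.
have [||eta' eta'K] := mgu_renamed_inverse _ delU h_inj th1_mgu.1 _ eta_th1.
- move=> x; rewrite /V !mem_cat /cvars /csubst /= => /orP [->//|->].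
  by rewrite !orbT.
- by rewrite del_a del_h.
have [|s [s_ren s_eta]] := @renaming_of_left_inverse _ eta eta' W.
  move=> v /gvars_gsubstP [x Hx Hv]; apply: eta'K Hv.
  move: Hx; rewrite gvars_pmerge gvars_gshift /V !mem_cat /cvars /csubst /=.
  by case/orP => ->; rewrite ?orbT.
by exists s; split=> //; apply: renaming_finsubst.
Qed.

End Resolvents.

Section Steps.
Context {Fs Ps : Type}.
Local Notation patom := (@patom Fs Ps).
Local Notation pgoal := (@pgoal Fs Ps).
Local Notation subst := (@subst Fs).
Local Notation step := (@step Fs Ps).

Lemma step_pdisj_body (d : step) a K :
  is_step d -> st_goal d = a :: K -> pdisj K (st_body d).
Proof. by rewrite /is_step => + g; rewrite g => -[_ [_ [_ [_ [_ [_ [_ []]]]]]]]. Qed.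

Lemma step_mgu_finsubst (d : step) : is_step d -> finsubst (st_mgu d).
Proof.
rewrite /is_step; case: (st_goal d) => // a K [_ [_ [_ [_ [_ [_ [th_rel _]]]]]]].
exact: relevant_finsubst th_rel.
Qed.

Lemma st_res_cons (d : step) a K :
  st_goal d = a :: K -> st_res d = gsubst (st_mgu d) (pmerge K (st_body d)).
Proof. by rewrite /st_res => ->. Qed.

Lemma congr_lowering_shift (Y K : pgoal) (d1 d2 : step) (a1 : patom) (sig : subst) rho :
  st_goal d1 = a1 :: K ->
  st_goal d2 = (asubst sig a1.1, rho a1.2) :: pmerge (gshift rho (gsubst sig K)) Y ->
  pdisj (gshift rho (gsubst sig K)) Y -> congr_lowering Y d1 d2 ->
  exists2 rho', shifting rho' & gshift rho' K = gshift rho K /\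
    gshift rho' (gshift (st_shift d1) (st_clause d1).2) =
    gshift (st_shift d2) (st_clause d1).2.
Proof.
(* The congruence is stated for the specialisation [(lam, sg)] witnessed in
   [congr_lowering]; it agrees with [(sig, rho)] on the priorities of [K]. *)
move=> g1 g2 dKY [_ [_ [_ [a' [K' [g1' [lam [sg [_ [_ [dKY' [g2' cong]]]]]]]]]]]].
move: g1' g2' dKY' cong; rewrite g1 g2 => -[<- <-] [_ _ eKY] dKY'.
move=> [rho' [rho'_sh [rho'K rho'B]]].
exists rho' => //; split=> //; rewrite rho'K; apply: gshift_priorities.
exact: pmerge_priorities_cancel dKY' dKY (esym eKY).
Qed.

Lemma resolvent_split_selected (d : step) a (F Y : pgoal) :
  is_step d -> st_goal d = a :: pmerge F Y -> pdisj (a :: F) Y ->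
  let H' := pmerge (gsubst (st_mgu d) (st_body d)) (gsubst (st_mgu d) F) in
  pdisj H' (gsubst (st_mgu d) Y) /\ st_res d = pmerge H' (gsubst (st_mgu d) Y).
Proof.
move=> st g dFY /=; have dKB := step_pdisj_body st g.
have /pdisj_pmergel [_ dYB] := dKB.
rewrite -gsubst_pmerge; split.
  by apply/pdisj_gsubst/pdisj_pmergel; split; [apply: pdisj_sym | apply: pdisj_consl dFY].
by rewrite (st_res_cons g) -gsubst_pmerge (pmergeA (st_body d)) (pmerge_comm dKB).
Qed.

Lemma resolvent_split_context (d : step) a (H Y : pgoal) :
  is_step d -> st_goal d = a :: pmerge H Y -> pdisj H (a :: Y) ->
  let Y' := gsubst (st_mgu d) (pmerge Y (st_body d)) in
  pdisj (gsubst (st_mgu d) H) Y' /\ st_res d = pmerge (gsubst (st_mgu d) H) Y'.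
Proof.
move=> st g dHY /=; have /pdisj_pmergel [dHB dYB] := step_pdisj_body st g.
split; last by rewrite (st_res_cons g) pmergeA gsubst_pmerge.
apply/pdisj_gsubst/pdisj_pmerger; split=> // x y Hx Hy.
by apply: dHY Hx _; right.
Qed.

Lemma sub_tmpl_nil_cons (d : step) ds a K (Y : pgoal) :
  st_goal d = a :: K -> sub_tmpl (d :: ds) Y [::] ->
  ~ List.In a Y /\ sub_tmpl ds (gsubst (st_mgu d) Y) [::].
Proof.
move=> g [Y' [M' [sub [T cl]]]].
move: cl; rewrite /sub_clause g => -[[_ //]|[aY EM]]; split=> //.
move: sub; rewrite /sub_step g => -[[F [EY _]]|[_ <-]]; last by rewrite EM.
by case: aY; rewrite EY; left.
Qed.

End Steps.

Section Derivations.
Context {Fs Ps : Type}.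
Local Notation pgoal := (@pgoal Fs Ps).
Local Notation subst := (@subst Fs).
Local Notation step := (@step Fs Ps).

Variable S : step -> Prop.
Hypothesis S_spec_indep : spec_independent S.

Lemma instance_step (d1 d2 : step) (sig : subst) rho a (F Y : pgoal) :
  S d1 -> S d2 -> is_step d1 -> is_step d2 -> st_clause d2 = st_clause d1 ->
  finsubst sig -> shifting rho ->
  gshift rho (gsubst sig (st_goal d1)) = a :: F -> pdisj (a :: F) Y ->
  st_goal d2 = a :: pmerge F Y ->
  exists sig1 rho', [/\ finsubst sig1, shifting rho',
    pmerge (gsubst (st_mgu d2) (st_body d2)) (gsubst (st_mgu d2) F) =
      gshift rho' (gsubst sig1 (st_res d1))
    & renaming sig -> renaming sig1].
Proof.
move=> Sd1 Sd2 st1 st2 c21 sig_fin rho_sh.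
case g1: (st_goal d1) st1 => [|a1 K] st1 //= [<- <-] {a F} dHY g2.
have dKY := pdisj_consl dHY.
have [|rho' rho'_sh [rho'K rho'B]] := congr_lowering_shift g1 g2 dKY.
  apply: S_spec_indep Sd1 Sd2 _; do 3!split=> //.
  by exists a1, K; split=> //; exists sig, rho.
move: (st1) (st2); rewrite /is_step g1 g2 => -[_ [_ [xi1_ren [fresh1 [th1_mgu _]]]]].
move=> -[_ [_ [xi2_ren [fresh2 [th2_mgu _]]]]].
rewrite c21 in fresh2 th2_mgu.
have [|sig1 [sig1_fin sig1E sig1_ren]] :=
  resolvent_instance (st_shift d1) xi1_ren xi2_ren fresh1 _ th1_mgu th2_mgu.
  move=> x Hx; apply: fresh2; rewrite gvars_cons mem_cat gvars_pmerge gvars_gshift.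
  by move: Hx; rewrite mem_cat => /orP [->|->]; rewrite ?orbT.
exists sig1, rho'; split=> //.
have /pdisj_pmergel [dFB _] := step_pdisj_body st2 g2.
rewrite -gsubst_pmerge -(pmerge_comm dFB) (st_res_cons g1) /st_body sig1E.
by rewrite [in RHS]gshift_gsubst gshift_pmerge // !gshift_gsubst rho'K rho'B c21.
Qed.

Lemma sub_derivation_instance (ds2 ds1 : seq step) (Qi Q Y R : pgoal) (sig : subst) rho :
  finsubst sig -> shifting rho -> pdisj (gshift rho (gsubst sig Qi)) Y ->
  chain Qi ds1 Q -> (forall d, List.In d ds1 -> S d) ->
  chain (pmerge (gshift rho (gsubst sig Qi)) Y) ds2 R -> (forall d, List.In d ds2 -> S d) ->
  sub_tmpl ds2 (gshift rho (gsubst sig Qi)) (template ds1) ->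
  exists sig' rho', [/\ finsubst sig', shifting rho',
    sub_res ds2 (gshift rho (gsubst sig Qi)) (gshift rho' (gsubst sig' Q))
    & renaming sig -> sub_tmpl ds2 Y [::] -> renaming sig'].
Proof.
elim: ds2 ds1 Qi Y sig rho => [|d2 ds2 IH] ds1 Qi Y sig rho sig_fin rho_sh dHY C1 S1 C2 S2.
  by case: ds1 C1 {S1} => [<-|//] _; exists sig, rho.
case: C2 => g2 [st2 C2] [H' [M' [sub2 [T cl2]]]].
have Sd2 : S d2 by apply: S2; left.
have S2' d : List.In d ds2 -> S d by move=> Hd; apply: S2; right.
case g2': (st_goal d2) => [|a K2]; first by move: st2; rewrite /is_step g2'.
move: (sub2) cl2; rewrite /sub_step /sub_clause g2'.
move=> [[F [EH EH']] | [aH EH']] [[aH' EM] | [aH' EM]]; try by [case: aH'; rewrite EH; left | case: aH].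
- case: ds1 EM C1 S1 => [|d1 ds1] //= [c12 EM] [g1 [st1 C1]] S1.
  have Sd1 : S d1 by apply: S1; left.
  rewrite EH in g2 dHY.
  have EK2 := pmerge_head_l dHY (etrans (esym g2) g2'); rewrite EK2 in g2'.
  have gH1 : gshift rho (gsubst sig (st_goal d1)) = a :: F by rewrite g1.
  have [sig1 [rho' [sig1_fin rho'_sh E1 sig1_ren]]] :=
    instance_step Sd1 Sd2 st1 st2 (esym c12) sig_fin rho_sh gH1 dHY g2'.
  have [dH'Y ER] := resolvent_split_selected st2 g2' dHY.
  rewrite E1 in dH'Y ER.
  have [|||sig' [rho'' [sig'_fin rho''_sh R' sig'_ren]]] :=
    IH ds1 (st_res d1) _ sig1 rho' sig1_fin rho'_sh dH'Y C1 _ _ S2' _.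
  + by move=> d Hd; apply: S1; right.
  + by rewrite -ER.
  + by rewrite -E1 -EH' EM.
  exists sig', rho''; split=> //; first by exists H'; split; last rewrite EH' E1.
  move=> sig_ren /(sub_tmpl_nil_cons g2') [_ TY].
  exact: sig'_ren (sig1_ren sig_ren) TY.
- have [Y' EY EK2] := pmerge_head_r aH (etrans (esym g2) g2').
  rewrite EK2 in g2'; rewrite EY in dHY.
  have [dH'Y ER] := resolvent_split_context st2 g2' dHY.
  have EH'' : H' = gshift rho (gsubst (tsubst (st_mgu d2) \o sig) Qi).
    by rewrite EH' -gsubst_comp !gshift_gsubst.
  rewrite -EH' EH'' in dH'Y ER.
  have sig1_fin := finsubst_comp sig_fin (step_mgu_finsubst st2).
  have [||sig' [rho'' [sig'_fin rho''_sh R' sig'_ren]]] :=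
    IH ds1 Qi _ _ rho sig1_fin rho_sh dH'Y C1 S1 _ S2' _.
  + by rewrite -ER.
  + by rewrite -EH'' EM.
  exists sig', rho''; split=> //; first by exists H'; split; last rewrite EH''.
  by move=> _ /(sub_tmpl_nil_cons g2') [+ _]; rewrite EY; case; left.
Qed.

End Derivations.

Theorem lemmaL3p1p1 (Fs Ps : Type) (S : @step Fs Ps -> Prop)
    (G X : @pgoal Fs Ps) (gam : @subst Fs) (tau : rat -> rat)
    (ds1 ds2 : seq (@step Fs Ps)) (Q R : @pgoal Fs Ps) :
  si_scheduling_rule S ->
  is_pgoal G -> is_pgoal X -> finsubst gam -> shifting tau ->
  pdisj (gshift tau (gsubst gam G)) X ->
  psld_via S G ds1 Q ->
  psld_via S (pmerge (gshift tau (gsubst gam G)) X) ds2 R ->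
  sub_tmpl ds2 (gshift tau (gsubst gam G)) (template ds1) ->
  exists (sig : @subst Fs) (rho : rat -> rat),
    finsubst sig /\ shifting rho /\
    sub_res ds2 (gshift tau (gsubst gam G)) (gshift rho (gsubst sig Q)) /\
    (renaming gam -> sub_tmpl ds2 X [::] -> renaming sig).
Proof.
move=> [_ S_spec_indep] _ _ gam_fin tau_sh dGX [[_ [C1 _]] S1] [[_ [C2 _]] S2] T.
have [sig [rho [sig_fin rho_sh RG sig_ren]]] :=
  sub_derivation_instance S_spec_indep gam_fin tau_sh dGX C1 S1 C2 S2 T.
by exists sig, rho.
Qed.
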